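(* Let $k\ge 1$ and let $n_1,\ldots,n_k\ge 3$ be (not necessarily distinct) integers such that $\gcd(k, n_1\cdots n_k)=1$. Then $C_{n_1}\Box\cdots\Box C_{n_k}$ is $\mathbb{Z}_{n_1\cdots n_k}$-distance antimagic if and only if all of $n_1,\ldots,n_k$ are odd. In particular, if $k\ge1$ and the odd integer $n\ge 3$ are coprime, then the Cartesian product of $k$ copies of $C_n$ is $\mathbb{Z}_{n^k}$-distance antimagic.
   Context: $C_n$ is the cycle of length $n$. The Cartesian product $G_1\Box\cdots\Box G_k$ has vertex set $V(G_1)\times\cdots\times V(G_k)$, with two tuples adjacent iff they differ in exactly one coordinate $i$ and are adjacent there in $G_i$. For a graph $G$ with $n$ vertices, a $\mathbb{Z}_n$-distance antimagic labelling is a bijection $f:V(G)\to\mathbb{Z}_n$ such that the weights $w_f(x)=\sum_{y\in N(x)} f(y)$ (mod $n$, $N(x)$ the open neighbourhood) are pairwise distinct; $G$ is $\mathbb{Z}_n$-distance antimagic if such a labelling exists. *)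

From mathcomp Require Import all_boot.
Set Implicit Arguments. Unset Strict Implicit. Unset Printing Implicit Defensive.

(* Adjacency in the cycle C_m on vertex set {0,...,m-1}: a ~ b iff b = a+1 mod m
   or a = b+1 mod m. (For m >= 3 this is the simple cycle of length m.) *)
Definition cyc_adj (m a b : nat) : bool :=
  ((a.+1 %% m) == b) || ((b.+1 %% m) == a).

Definition cprod_vtx (k : nat) (n : 'I_k -> nat) : finType :=
  {dffun forall i : 'I_k, 'I_(n i)}.

Definition cprod_adj (k : nat) (n : 'I_k -> nat) : rel (cprod_vtx n) :=
  fun x y => [exists i : 'I_k,
     cyc_adj (n i) (x i) (y i) && [forall j : 'I_k, (j != i) ==> (x j == y j)]].

(* A graph (V, adj) with |V| = N vertices is Z_N-distance antimagic if there is a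
   bijection f : V -> Z_N (here 'I_N with arithmetic mod N) such that the weights
   w(x) = sum_{y in N(x)} f(y) mod N are pairwise distinct. *)
Definition Zn_distance_antimagic (V : finType) (adj : rel V) : Prop :=
  exists f : V -> 'I_#|V|,
    bijective f /\
    injective (fun x : V => (\sum_(y | adj x y) val (f y)) %% #|V|).

From mathcomp Require Import all_boot all_algebra zify ring.
Set Implicit Arguments. Unset Strict Implicit. Unset Printing Implicit Defensive.

(* In a d-regular graph on N vertices, summing all weights counts
   every label d times, so sum_x w(x) = d * (0 + ... + N-1) = d * C(N,2).  If
   the weights are distinct mod N they are a permutation of Z_N, hence also sum
   to C(N,2) mod N.  For N and d both even, C(N,2) = N/2 mod N while
   d * C(N,2) = 0 mod N: a contradiction.  The product graph is 2k-regular, so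
   it is not Z_N-distance antimagic as soon as some n_i is even.

   Label a vertex x by its mixed-radix value
   sum_j M_j * x_j, where M_j = n_0 * ... * n_(j-1).  Its weight equals
   2k * value(x) + sum_j M_(j+1) * carry(x_j), where carry records the
   wrap-around of the cycle C_(n_j).  Any "twisted value"
   c * value(x) + sum_j M_(j+1) * e_j(x_j) with c prime to every n_j is
   injective mod N: reading the difference modulo M_(i+1) determines digit i
   once the lower digits agree.  Taking c = 1 gives a bijective labelling and
   c = 2k gives distinct weights, provided 2k is prime to every n_j. *)

(* Double counting in a d-regular graph: each vertex y lies in exactly d
   neighbourhoods, so summing g over all neighbourhoods gives d * sum g. *)
Section RegularGraphs.
Variables (V : finType) (adj : rel V) (d : nat).
Hypothesis adj_sym : symmetric adj.
Hypothesis adj_regular : forall x, #|[pred y | adj x y]| = d.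

Lemma sum_neighbour_sums (g : V -> nat) :
  \sum_x \sum_(y | adj x y) g y = d * \sum_x g x.
Proof.
rewrite (exchange_big_dep predT) //= big_distrr /=; apply: eq_bigr => y _.
rewrite (eq_bigl [pred x | adj y x]) => [|x]; last by rewrite /= adj_sym.
by rewrite sum_nat_const adj_regular mulnC.
Qed.

End RegularGraphs.

(* A bijection onto 'I_N takes every value 0, ..., N-1 exactly once. *)
Lemma sum_bijective_ord (T : finType) (N : nat) (h : T -> 'I_N) :
  bijective h -> \sum_x val (h x) = 'C(N, 2).
Proof.
by move=> h_bij; rewrite -bin2_sum big_mkord [RHS](reindex h) //; exact: onW_bij.
Qed.

(* For N = 2m and d even: C(N,2) = m(2m-1) = m mod N, while d * C(N,2) is a
   multiple of N.  This is the arithmetic obstruction behind necessity. *)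
Lemma bin2_mod_even (N d : nat) : 0 < N -> ~~ odd N -> ~~ odd d ->
  'C(N, 2) %% N != (d * 'C(N, 2)) %% N.
Proof.
move=> + /negbTE N_even /negbTE d_even.
have [m ->] : exists m, N = m.*2 by exists N./2; rewrite -[LHS]odd_double_half N_even.
have [e ->] : exists e, d = e.*2 by exists d./2; rewrite -[LHS]odd_double_half d_even.
rewrite double_gt0 => m_gt0.
have bin2E : 'C(m.*2, 2) = m + m.-1 * m.*2.
  by rewrite bin2 -!muln2 -{1}(prednK m_gt0); lia.
rewrite bin2E [m + _]addnC modnMDl modn_small; last lia.
have -> : e.*2 * (m.-1 * m.*2 + m) = (e * (m.-1.*2.+1)) * m.*2.
  by rewrite -{1 2}(prednK m_gt0) -!muln2; nia.
by rewrite modnMl -lt0n.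
Qed.

Theorem even_regular_not_antimagic (V : finType) (adj : rel V) (d : nat) :
  symmetric adj -> (forall x, #|[pred y | adj x y]| = d) ->
  0 < #|V| -> ~~ odd #|V| -> ~~ odd d -> ~ Zn_distance_antimagic adj.
Proof.
move=> adj_sym adj_regular N_gt0 N_even d_even [f [f_bij w_inj]].
pose w x := Ordinal (ltn_pmod (\sum_(y | adj x y) val (f y)) N_gt0).
have w_bij : bijective w.
  by apply: inj_card_bij; [move=> x y /(congr1 val)/w_inj | rewrite card_ord].
have := bin2_mod_even N_gt0 N_even d_even.
rewrite -{1}(sum_bijective_ord w_bij) -(sum_bijective_ord f_bij).
by rewrite -(sum_neighbour_sums adj_sym adj_regular) modn_summ eqxx.
Qed.

Lemma val_iter_ordS m (a : 'I_m) j : val (iter j (@ordS m) a) = (a + j) %% m.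
Proof.
elim: j => [|j IH] /=; first by rewrite addn0 modn_small.
by rewrite IH -addn1 modnDml addn1 addnS.
Qed.

Lemma iter_ordS_neq m (a : 'I_m) j : 0 < j < m -> iter j (@ordS m) a != a.
Proof.
case/andP=> j_gt0 j_lt_m; apply/negP => /eqP/(congr1 val); rewrite val_iter_ordS => h.
have : a + j == a + 0 %[mod m] by rewrite addn0 h modn_small.
by rewrite eqn_modDl mod0n modn_small // eqn0Ngt j_gt0.
Qed.

Definition shift (b : bool) (m : nat) : 'I_m -> 'I_m :=
  if b then @ordS m else @ord_pred m.

Lemma shift_neq m (a : 'I_m) b : 1 < m -> shift b a != a.
Proof.
move=> m_gt1; case: b => /=; first exact: (@iter_ordS_neq _ _ 1).
by apply: contra_neq (@iter_ordS_neq _ a 1 m_gt1) => E; rewrite /= -{1}E ord_predK.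
Qed.

Lemma shift_inj m (a : 'I_m) b b' : 2 < m -> shift b a = shift b' a -> b = b'.
Proof.
move=> m_gt2; case: b b' => [] [] //= E; have := @iter_ordS_neq _ a 2 m_gt2;
  [rewrite /= E | rewrite /= -E]; by rewrite ord_predK eqxx.
Qed.

Lemma cyc_adjE m (a b : 'I_m) : cyc_adj m a b = [exists s, b == shift s a].
Proof.
rewrite /cyc_adj; apply/orP/existsP => [[E|E]|[[] /eqP->]].
- by exists true; rewrite eq_sym -val_eqE.
- exists false; rewrite /= -(can2_eq (@ordSK m) (@ord_predK m)) -val_eqE /=.
  by rewrite (eqP E).
- by left.
- by right; apply/eqP; exact: (congr1 val (ord_predK a)).
Qed.

Lemma val_ordS m (a : 'I_m) : ordS a + m * (a == m.-1 :> nat) = a.+1.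
Proof.
have a_lt_m := ltn_ord a; rewrite /=; case: eqVneq => [->|a_neq].
  by rewrite prednK ?modnn ?muln1 // (leq_ltn_trans _ a_lt_m).
by rewrite muln0 addn0 modn_small //; lia.
Qed.

Lemma val_ord_pred m (a : 'I_m) : ord_pred a + 1 = a + m * (a == 0 :> nat).
Proof.
have a_lt_m := ltn_ord a; rewrite /=; case: eqVneq => [->|a_neq].
  by rewrite add0n muln1 modn_small ?addn1 ?prednK //; lia.
have -> : (a + m).-1 = a.-1 + m by lia.
by rewrite modnDr modn_small /=; lia.
Qed.

(* The net wrap-around of the two neighbours of a in C_m, in units of m. *)
Definition carry m (a : 'I_m) : int :=
  ((nat_of_ord a == 0) : nat)%:Z - ((nat_of_ord a == m.-1) : nat)%:Z.

Lemma ordS_add_ord_pred m (a : 'I_m) :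
  ((ordS a : nat)%:Z + (ord_pred a : nat)%:Z = 2 * (a : nat)%:Z + m%:Z * carry a)%R.
Proof.
move: (val_ordS a) (val_ord_pred a); rewrite /carry.
by case: (nat_of_ord a == m.-1); case: (nat_of_ord a == 0) => /= up down; lia.
Qed.

Section CycleProduct.
Variables (k : nat) (n : 'I_k -> nat).
Implicit Types (x y : cprod_vtx n).

Definition nbr x (i : 'I_k) (b : bool) : cprod_vtx n :=
  finfun (fun j => if j == i then shift b (x j) else x j).

Lemma cprod_adjP x y :
  reflect (exists p : 'I_k * bool, y = nbr x p.1 p.2) (cprod_adj x y).
Proof.
apply: (iffP existsP) => [[i /andP [] /[!cyc_adjE] /existsP [b /eqP yi] /forallP same]
                         | [[i b] ->]].
  exists (i, b); apply/ffunP => j; rewrite ffunE /=.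
  by case: eqVneq => [->|ji] //; rewrite (eqP (implyP (same j) ji)).
exists i; rewrite /nbr ffunE eqxx cyc_adjE; apply/andP; split.
  by apply/existsP; exists b.
by apply/forallP => j; apply/implyP => ji; rewrite ffunE (negbTE ji).
Qed.

Lemma cprod_adj_sym : symmetric (@cprod_adj k n).
Proof.
move=> x y; apply: eq_existsb => i; rewrite /cyc_adj orbC.
by congr (_ && _); apply: eq_forallb => j; rewrite [x j == _]eq_sym.
Qed.

Lemma card_cprod_vtx : #|cprod_vtx n| = \prod_(i < k) n i.
Proof.
rewrite /cprod_vtx card_dep_ffun foldrE big_map big_enum /=.
by apply: eq_bigr => i _; rewrite card_ord.
Qed.

Hypothesis n_gt2 : forall i, 2 < n i.

Lemma nbr_inj x : injective (fun p : 'I_k * bool => nbr x p.1 p.2).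
Proof.
move=> [i b] [j b'] /= /ffunP/(_ i); rewrite !ffunE eqxx.
case: eqVneq => [<- /(shift_inj (n_gt2 i)) -> //|_ E]; exfalso.
by move: (shift_neq (x i) b (ltnW (n_gt2 i))); rewrite E eqxx.
Qed.

Lemma sum_cprod_adj x (F : cprod_vtx n -> nat) :
  \sum_(y | cprod_adj x y) F y = \sum_(i < k) (F (nbr x i true) + F (nbr x i false)).
Proof.
pose nb (p : 'I_k * bool) := nbr x p.1 p.2.
rewrite (eq_bigl (mem (nb @: [set: 'I_k * bool]))) => [|y]; last first.
  by apply/cprod_adjP/imsetP => [[p ->]|[p _ ->]]; exists p.
rewrite big_imset /=; last by move=> p q _ _; apply: nbr_inj.
rewrite (eq_bigl predT) => [|p]; last by rewrite in_setT.
transitivity (\sum_i \sum_b F (nbr x i b)); first by rewrite pair_bigA.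
by apply: eq_bigr => i _; rewrite big_bool.
Qed.

Lemma cprod_regular x : #|[pred y | cprod_adj x y]| = 2 * k.
Proof. by rewrite -sum1_card sum_cprod_adj sum_nat_const card_ord muln2 mul2n. Qed.

Theorem cprod_even_not_antimagic (i : 'I_k) :
  ~~ odd (n i) -> ~ Zn_distance_antimagic (@cprod_adj k n).
Proof.
move=> n_i_even; apply: (even_regular_not_antimagic cprod_adj_sym cprod_regular).
- by rewrite card_cprod_vtx prodn_gt0 // => j; apply: ltnW (ltnW (n_gt2 j)).
- by rewrite card_cprod_vtx (bigD1 i) //= oddM negb_and n_i_even.
- by rewrite mul2n odd_double.
Qed.

End CycleProduct.

Section MixedRadix.
Variables (k : nat) (n : 'I_k -> nat).
Implicit Types (x y : cprod_vtx n).

Definition radix (j : nat) : nat := \prod_(l < k | l < j) n l.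

Definition digits_value x : nat := \sum_(j < k) radix j * x j.

Lemma radixS (i : 'I_k) : radix i.+1 = radix i * n i.
Proof.
rewrite /radix (bigD1 i) //= mulnC; congr (_ * _); apply: eq_bigl => j.
by rewrite ltnS leq_eqVlt -val_eqE; case: eqVneq => [->|_] /=; rewrite ?ltnn ?andbT.
Qed.

Lemma radix_dvd i j : i <= j -> radix i %| radix j.
Proof.
move=> le_ij; rewrite /radix [X in _ %| X](bigID [pred l : 'I_k | l < i]) /=.
apply: dvdn_mulr; rewrite [X in _ %| X](eq_bigl [pred l : 'I_k | l < i]) // => l /=.
by case: (ltnP l i) => [/leq_trans->|]; rewrite ?andbF.
Qed.

Lemma radix_top : radix k = \prod_(i < k) n i.
Proof. by apply: eq_bigl => j; rewrite ltn_ord. Qed.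

Lemma radix_gt0 j : (forall i, 0 < n i) -> 0 < radix j.
Proof. by move=> n_gt0; rewrite prodn_gt0. Qed.

Lemma digits_value_nbr x (i : 'I_k) b :
  digits_value (nbr x i b) + radix i * x i = digits_value x + radix i * shift b (x i).
Proof.
rewrite /digits_value (bigD1 i) //= [in RHS](bigD1 i) //= ffunE eqxx.
under eq_bigr => j ji do rewrite ffunE (negbTE ji).
by rewrite addnC addnA [in RHS]addnAC.
Qed.

End MixedRadix.

Import GRing.Theory.

(* Both the labels and the weights of the sufficiency labelling are instances of
   a twisted value: c times the mixed-radix value plus, for each digit j, an
   arbitrary integer perturbation e_j(x_j) at the next place value radix (j+1). *)
Section TwistedValue.
Variables (k : nat) (n : 'I_k -> nat).
Implicit Types (x y : cprod_vtx n).
Local Open Scope ring_scope.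

Definition twisted_value (c : int) (e : forall i : 'I_k, 'I_(n i) -> int) x : int :=
  c * (digits_value x)%:Z + \sum_(j < k) (radix n j.+1)%:Z * e j (x j).

Lemma digits_valueZ x :
  (digits_value x)%:Z = \sum_(j < k) (radix n j)%:Z * (x j : nat)%:Z.
Proof. by rewrite -natz natr_sum; apply: eq_bigr => j _; rewrite natrM !natz. Qed.

Lemma twisted_value_plain x : twisted_value 1 (fun _ _ => 0) x = (digits_value x)%:Z.
Proof. by rewrite /twisted_value big1 ?addr0 ?mul1r // => j _; rewrite mulr0. Qed.

Hypothesis n_gt0 : forall i, (0 < n i)%N.

Lemma twisted_digit_eq c e x y (i : 'I_k) :
  coprimez c (n i)%:Z -> (forall j : 'I_k, (j < i)%N -> x j = y j) ->
  ((radix n i.+1)%:Z %| twisted_value c e x - twisted_value c e y)%Z -> x i = y i.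
Proof.
move=> c_coprime below dvd_diff.
pose T (j : 'I_k) := c * ((radix n j)%:Z * ((x j : nat)%:Z - (y j : nat)%:Z))
  + (radix n j.+1)%:Z * (e j (x j) - e j (y j)).
have diffE : twisted_value c e x - twisted_value c e y = \sum_j T j.
  rewrite /twisted_value !digits_valueZ !mulr_sumr -!big_split -sumrB /=.
  by apply: eq_bigr => j _; rewrite /T; ring.
have dvd_others : ((radix n i.+1)%:Z %| \sum_(j | j != i) T j)%Z.
  apply: rpred_sum => j; case: (ltngtP j i) => [lt_ji _|lt_ij _|/val_inj->];
    last by rewrite eqxx.
    by rewrite /T (below j lt_ji) !subrr !mulr0 addr0 dvdz0.
  rewrite /T; apply: rpredD; [apply/dvdz_mull/dvdz_mulr | apply/dvdz_mulr];
    rewrite dvdzE; apply: radix_dvd; by [|apply: ltnW].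
have dvd_Ti : ((radix n i.+1)%:Z %| T i)%Z.
  by move: dvd_diff; rewrite diffE (bigD1 i) //= (rpredDr _ dvd_others).
have carry_term : ((radix n i.+1)%:Z %| (radix n i.+1)%:Z * (e i (x i) - e i (y i)))%Z.
  exact: dvdz_mulr (dvdzz _).
move: dvd_Ti; rewrite /T (rpredDr _ carry_term).
rewrite radixS PoszM mulrCA dvdz_mul2l; last by rewrite eqz_nat -lt0n radix_gt0.
rewrite Gauss_dvdzr; last by rewrite coprimez_sym.
rewrite -eqz_mod_dvd !modz_nat => /eqP[].
by rewrite !modn_small // => /val_inj.
Qed.

(* The twisted value is injective modulo n_0 ... n_(k-1): compare digits
   from the least significant one upwards. *)
Lemma twisted_value_inj c e x y : (forall i, coprimez c (n i)%:Z) ->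
  ((\prod_(i < k) n i)%N%:Z %| twisted_value c e x - twisted_value c e y)%Z -> x = y.
Proof.
move=> c_coprime dvd_diff; apply/ffunP => i.
suff agree m (j : 'I_k) : (j < m)%N -> x j = y j by exact: agree i.+1 i (ltnSn i).
elim: m j => [//|m IH] j; rewrite ltnS leq_eqVlt => /predU1P [j_eq_m|]; last exact: IH.
apply: twisted_digit_eq => // [l|]; first by rewrite j_eq_m; exact: IH.
by apply: dvdz_trans dvd_diff; rewrite dvdzE /= -radix_top radix_dvd.
Qed.

End TwistedValue.

Section Sufficiency.
Variables (k : nat) (n : 'I_k -> nat).
Hypothesis n_gt2 : forall i, (2 < n i)%N.
Local Open Scope ring_scope.

Lemma neighbour_value_sum (x : cprod_vtx n) (i : 'I_k) :
  (digits_value (nbr x i true) + digits_value (nbr x i false))%N%:Z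
  = 2 * (digits_value x)%:Z + (radix n i.+1)%:Z * carry (x i).
Proof.
move: (digits_value_nbr x i true) (digits_value_nbr x i false).
move=> /(congr1 Posz) up /(congr1 Posz) down; rewrite /= !(PoszD, PoszM) in up down.
have := congr1 (fun t => (radix n i)%:Z * t) (ordS_add_ord_pred (x i)).
rewrite radixS PoszM /=; lia.
Qed.

Lemma weight_twisted (x : cprod_vtx n) :
  (\sum_(y | cprod_adj x y) digits_value y)%N%:Z
  = twisted_value (2 * k)%N%:Z (fun i => @carry (n i)) x.
Proof.
rewrite sum_cprod_adj // -natz natr_sum.
under eq_bigr => i _ do rewrite natz neighbour_value_sum.
rewrite big_split /= sumr_const card_ord /twisted_value -mulr_natr PoszM.
congr (_ + _); ring.
Qed.

Theorem cprod_antimagic :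
  (forall i, coprime (2 * k) (n i)) -> Zn_distance_antimagic (@cprod_adj k n).
Proof.
move=> coprime_2k.
have n_gt0 i : (0 < n i)%N by apply: ltnW (ltnW (n_gt2 i)).
have N_gt0 : (0 < #|cprod_vtx n|)%N by rewrite card_cprod_vtx prodn_gt0.
have mod_dvd (a b : nat) : (a %% #|cprod_vtx n| = b %% #|cprod_vtx n|)%N ->
    ((\prod_(i < k) n i)%N%:Z %| a%:Z - b%:Z)%Z.
  by rewrite -card_cprod_vtx -eqz_mod_dvd !modz_nat => ->.
pose f (x : cprod_vtx n) := Ordinal (ltn_pmod (digits_value x) N_gt0).
have f_inj : injective f.
  move=> x y /(congr1 val)/mod_dvd; rewrite -!twisted_value_plain.
  by apply: twisted_value_inj => // i; rewrite coprimezE coprime1n.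
exists f; split; first by apply: inj_card_bij f_inj _; rewrite card_ord.
move=> x y /=; rewrite !modn_summ => /mod_dvd; rewrite !weight_twisted.
exact: twisted_value_inj.
Qed.

End Sufficiency.

(* The main theorem: necessity needs no coprimality; for sufficiency, odd n_i
   together with gcd(k, N) = 1 make 2k prime to every n_i. *)
Theorem mainTheorem13 :
  (forall (k : nat) (n : 'I_k -> nat),
     1 <= k ->
     (forall i, 3 <= n i) ->
     coprime k (\prod_(i < k) n i) ->
     (Zn_distance_antimagic (@cprod_adj k n) <-> (forall i, odd (n i))))
  /\
  (forall k m : nat,
     1 <= k -> 3 <= m -> odd m -> coprime k m ->
     Zn_distance_antimagic (@cprod_adj k (fun _ => m))).
Proof.
split=> [k n _ n_gt2 k_coprime | k m _ m_gt2 m_odd k_coprime].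
  split=> [antimagic i | n_odd].
    by apply/negPn/negP => /(cprod_even_not_antimagic n_gt2).
  apply: cprod_antimagic => // i; rewrite coprimeMl coprime2n n_odd.
  by apply: coprime_dvdr k_coprime; rewrite (bigD1 i) //= dvdn_mulr.
by apply: cprod_antimagic => // i; rewrite coprimeMl coprime2n m_odd.
Qed.
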